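(* Let $\mathcal{T}$ be a triangulation of $C(m,2d+1)$, $v\in[m]$, and let $S,R$ be $2d$-simplices of $\mathcal{T}\backslash v$ (with $S\cap R$ of size $2d$). Then $S\cap R$ cannot be both a lower facet of $S$ and a lower facet of $R$; similarly $S\cap R$ cannot be both an upper facet of $S$ and an upper facet of $R$.
   Context: $C(V,n)$ is the cyclic polytope on a finite ordered set $V$ (convex hull of $(t_v,\dots,t_v^n)$, $t_v$ increasing); $C(m,n)=C([m],n)$; a triangulation of it is a set of $(n+1)$-subsets whose geometric simplices form a simplicial complex covering it. For a triangulation $\mathcal{T}$ of $C(m,2d+1)$ and $v\in[m]$, $\mathcal{T}\backslash v=\{S\setminus\{v\}: S\in\mathcal{T},\ v\in S\}$, a set of $2d$-simplices ($(2d+1)$-subsets of $[m]\setminus\{v\}$). Let $[m]_{v+}=\{1,\dots,v-1,x,y,v+1,\dots,m\}$ ordered with $v-1<x<y<v+1$. The circuits of $C(V,2d+1)$ are the pairs $(Z,Z')$ of disjoint subsets with, after listing $Z\cup Z'$ increasingly as $c_0<c_1<\dots<c_{2d+2}$, one of $Z,Z'$ equal to $\{c_1,c_3,\dots,c_{2d+1}\}$ and the other to $\{c_0,c_2,\dots,c_{2d+2}\}$. For a $2d$-simplex $S$ of $\mathcal{T}\backslash v$, the set $S\cup\{x,y\}$ has $2d+3$ elements and so splits uniquely into the two halves of a circuit of $C([m]_{v+},2d+1)$; since $x,y$ are adjacent they lie in different halves, and we write these halves as $S_-\cup\{x\}$ and $S_+\cup\{y\}$ with $S=S_-\sqcup S_+$.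 For $s\in S$, $S\setminus\{s\}$ is a lower facet of $S$ if $s\in S_+$ and an upper facet of $S$ if $s\in S_-$. *)

From mathcomp Require Import all_boot all_order all_algebra.
Set Implicit Arguments. Unset Strict Implicit. Unset Printing Implicit Defensive.
Import Order.TTheory GRing.Theory Num.Theory.
Local Open Scope ring_scope.

(* Vertices of C(m, 2d+1) are the elements of 'I_m (vertex i stands for the
   paper's vertex i+1), with parameters t : 'I_m -> R strictly increasing. *)

Section Cyclic.
Variables (R : realFieldType) (d m : nat) (t : 'I_m -> R).

Definition mpoint (u : 'I_m) : 'rV[R]_(2 * d).+1 :=
  \row_(i < (2 * d).+1) (t u) ^+ i.+1.

Definition in_conv (A : {set 'I_m}) (x : 'rV[R]_(2 * d).+1) : Prop :=
  exists lam : 'I_m -> R,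
    [/\ forall i, 0 <= lam i,
        forall i, i \notin A -> lam i = 0,
        \sum_i lam i = 1
      & x = \sum_i lam i *: mpoint i].

(* T is a triangulation of C(m, 2d+1): its elements are (2d+2)-subsets whose
   geometric simplices pairwise intersect in a common face (simplicial
   complex) and whose union is the whole polytope. *)
Definition triangulation (T : {set {set 'I_m}}) : Prop :=
  [/\ forall S, S \in T -> #|S| = (2 * d).+2,
      forall S S', S \in T -> S' \in T -> forall x,
        (in_conv S x /\ in_conv S' x) <-> in_conv (S :&: S') x
    & forall x, in_conv [set: 'I_m] x <-> exists2 S, S \in T & in_conv S x].
End Cyclic.

Section Link.
Variable m : nat.

Definition link (T : {set {set 'I_m}}) (v : 'I_m) : {set {set 'I_m}} :=
  [set S :\ v | S in [set S in T | v \in S]].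

(* The ordered set [m]_{v+} embedded order-preservingly into nat:
   u <> v  |->  2u+2,   x |-> 2v+1,   y |-> 2v+3. *)
Definition key (u : 'I_m) : nat := (2 * u + 2)%N.
Definition xkey (v : 'I_m) : nat := (2 * v + 1)%N.
Definition ykey (v : 'I_m) : nat := (2 * v + 3)%N.

Definition ext (v : 'I_m) (S : {set 'I_m}) : seq nat :=
  xkey v :: ykey v :: [seq key u | u <- enum S].

Definition rnk (v : 'I_m) (S : {set 'I_m}) (z : nat) : nat :=
  count (fun w => (w < z)%N) (ext v S).

(* The circuit halves of S ∪ {x,y} are its even- and odd-indexed elements;
   S_- ∪ {x} is the half containing x, S_+ ∪ {y} the half containing y. *)
Definition Sminus (v : 'I_m) (S : {set 'I_m}) : {set 'I_m} :=
  [set s in S | odd (rnk v S (key s)) == odd (rnk v S (xkey v))].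
Definition Splus (v : 'I_m) (S : {set 'I_m}) : {set 'I_m} :=
  [set s in S | odd (rnk v S (key s)) == odd (rnk v S (ykey v))].

Definition lower_facet (v : 'I_m) (S F : {set 'I_m}) : Prop :=
  exists2 s, s \in Splus v S & F = S :\ s.
Definition upper_facet (v : 'I_m) (S F : {set 'I_m}) : Prop :=
  exists2 s, s \in Sminus v S & F = S :\ s.
End Link.

(* Let A = v |: S and B = v |: R, two simplices of T through the common facet
   v |: (S :&: R), and U = A :|: B, of size 2d+3.  The divided-difference
   weights lam_i = 1 / prod_(j in U, j != i) (t_i - t_j) give the affine
   dependence of the moment points of U; their signs alternate along U, so the
   sign classes are the two halves of the circuit of U.  If the extra vertices
   s of A and r of B were in opposite halves, the Radon point of the circuit
   would lie in conv A and conv B, hence in conv (A :&: B), while having a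
   nonzero barycentric coordinate on s, which is not in B.  So s and r have
   ranks of equal parity in U, and counting positions this says that S :&: R
   is a lower facet of exactly one of S and R. *)

From mathcomp Require Import all_boot all_order all_algebra.
From mathcomp Require Import zify.
Import Order.TTheory GRing.Theory Num.Theory.
Set Implicit Arguments. Unset Strict Implicit. Unset Printing Implicit Defensive.
Local Open Scope ring_scope.

Section DividedDifferences.
Variables (K : fieldType) (m : nat) (t : 'I_m -> K).
Hypothesis t_inj : injective t.
Implicit Types A U : {set 'I_m}.

Definition node_poly (A : {set 'I_m}) : {poly K} := \prod_(j in A) ('X - (t j)%:P).

Lemma size_node_poly A : size (node_poly A) = #|A|.+1.
Proof. by rewrite /node_poly -big_enum size_prod_XsubC cardE. Qed.

Lemma node_poly_monic A : node_poly A \is monic.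
Proof. exact: monic_prod_XsubC. Qed.

Lemma horner_node_poly A a : (node_poly A).[a] = \prod_(j in A) (a - t j).
Proof. by rewrite horner_prod; apply: eq_bigr => j _; rewrite hornerXsubC. Qed.

Lemma node_poly_root A i : i \in A -> (node_poly A).[t i] = 0.
Proof. by move=> iA; rewrite horner_node_poly (bigD1 i) //= subrr mul0r. Qed.

Lemma node_poly_nonroot A i : i \notin A -> (node_poly A).[t i] != 0.
Proof.
move=> iA; rewrite horner_node_poly; apply/prodf_neq0 => j jA.
by rewrite subr_eq0; apply: contraNneq iA => /t_inj ->.
Qed.

Lemma poly_eq0_on (p : {poly K}) A :
  (size p <= #|A|)%N -> (forall i, i \in A -> p.[t i] = 0) -> p = 0.
Proof.
move=> size_p p_A; apply: (roots_geq_poly_eq0 (rs := [seq t j | j <- enum A])).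
- by apply/allP => _ /mapP[j + ->]; rewrite mem_enum => /p_A /eqP.
- by rewrite map_inj_uniq ?enum_uniq.
- by rewrite size_map -cardE.
Qed.

Lemma sum_mul_horner_eq0 (c : 'I_m -> K) n (p : {poly K}) :
  (forall k, (k < n)%N -> \sum_i c i * t i ^+ k = 0) -> (size p <= n)%N ->
  \sum_i c i * p.[t i] = 0.
Proof.
move=> c_pow size_p.
under eq_bigr => i _ do rewrite horner_coef big_distrr /=.
rewrite exchange_big big1 //= => k _.
under eq_bigr => i _ do rewrite mulrCA.
by rewrite -big_distrr /= c_pow ?mulr0 // (leq_trans (ltn_ord k) size_p).
Qed.

Lemma vandermonde_coef_eq0 A (c : 'I_m -> K) n :
  (forall i, i \notin A -> c i = 0) -> (#|A| <= n)%N ->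
  (forall k, (k < n)%N -> \sum_i c i * t i ^+ k = 0) -> forall i, c i = 0.
Proof.
move=> c_out card_A c_pow i0; have [i0A|/c_out //] := boolP (i0 \in A).
have size_p : (size (node_poly (A :\ i0)) <= n)%N.
  by rewrite size_node_poly; move: card_A; rewrite (cardsD1 i0 A) i0A.
have := sum_mul_horner_eq0 c_pow size_p.
rewrite (bigD1 i0) //= big1 ?addr0 => [/eqP|i ii0].
  by rewrite mulf_eq0 (negbTE (node_poly_nonroot _)) ?orbF ?setD11 => // /eqP.
have [iA|/c_out ->] := boolP (i \in A); last by rewrite mul0r.
by rewrite node_poly_root ?mulr0 // !inE ii0.
Qed.

Definition divdiff_coef U i :=
  if i \in U then (\prod_(j in U :\ i) (t i - t j))^-1 else 0.

Lemma divdiff_coef_node_poly U i :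
  i \in U -> divdiff_coef U i * (node_poly (U :\ i)).[t i] = 1.
Proof.
by move=> iU; rewrite /divdiff_coef iU -horner_node_poly mulVf ?node_poly_nonroot ?setD11.
Qed.

(* Lagrange interpolation of 'X^k on the nodes of U, read off at the top coefficient. *)
Lemma sum_divdiff_coef_expr U k :
  (k.+2 <= #|U|)%N -> \sum_i divdiff_coef U i * t i ^+ k = 0.
Proof.
move=> kU.
pose L := \sum_(i in U) (divdiff_coef U i * t i ^+ k) *: node_poly (U :\ i).
have size_node i : i \in U -> size (node_poly (U :\ i)) = #|U|.
  by move=> iU; rewrite size_node_poly (cardsD1 i U) iU.
have LE : L = 'X^k.
  apply/subr0_eq/(@poly_eq0_on _ U).
    rewrite (leq_trans (size_polyD _ _)) // size_polyN size_polyXn geq_max.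
    rewrite (ltn_trans _ kU) // andbT.
    apply: (big_ind (fun q : {poly K} => (size q <= #|U|)%N)) => [|p q|i iU].
    - by rewrite size_poly0.
    - by move=> *; rewrite (leq_trans (size_polyD _ _)) // geq_max; apply/andP.
    - by rewrite (leq_trans (size_scale_leq _ _)) // size_node.
  move=> j jU; rewrite hornerD hornerN hornerXn horner_sum (bigD1 j) //=.
  rewrite big1 => [|i /andP[iU ij]]; last first.
    by rewrite hornerZ node_poly_root ?mulr0 // !inE eq_sym ij.
  by rewrite addr0 hornerZ mulrAC divdiff_coef_node_poly // mul1r subrr.
have := congr1 (fun q : {poly K} => q`_(#|U|.-1)) LE.
rewrite /= coefXn gtn_eqF; last by rewrite -ltnS (ltn_predK kU).
rewrite coef_sum => E; rewrite -[RHS]E [RHS]big_mkcond; apply: eq_bigr => i _ /=.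
case: ifPn => [iU|iU]; last by rewrite /divdiff_coef (negbTE iU) mul0r.
by rewrite coefZ -(size_node i iU) -lead_coefE (monicP (node_poly_monic _)) mulr1.
Qed.

End DividedDifferences.

Section MomentCurve.
Variables (K : realFieldType) (d m : nat) (t : 'I_m -> K).
Hypothesis t_inj : injective t.

Lemma sum_mpoint (f : 'I_m -> K) (j : 'I_(2 * d).+1) :
  (\sum_i f i *: mpoint d t i) 0 j = \sum_i f i * t i ^+ j.+1.
Proof. by rewrite summxE; apply: eq_bigr => i _; rewrite !mxE. Qed.

Lemma mpoint_coef_unique (A : {set 'I_m}) (a b : 'I_m -> K) :
  (#|A| <= (2 * d).+2)%N ->
  (forall i, i \notin A -> a i = 0) -> (forall i, i \notin A -> b i = 0) ->
  \sum_i a i = \sum_i b i ->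
  \sum_i a i *: mpoint d t i = \sum_i b i *: mpoint d t i -> a =1 b.
Proof.
move=> card_A a_out b_out sum_ab pt_ab i; apply/subr0_eq.
apply: (vandermonde_coef_eq0 t_inj (c := fun i => a i - b i)) card_A _ i.
  by move=> j jA; rewrite a_out ?b_out ?subrr.
case=> [|k] k_lt; under eq_bigr do rewrite mulrBl.
  by rewrite sumrB !(eq_bigr _ (fun i _ => mulr1 _)) sum_ab subrr.
have := congr1 (fun x : 'rV_(2 * d).+1 => x 0 (Ordinal (k_lt : (k < (2 * d).+1)%N))) pt_ab.
by rewrite sumrB /= !sum_mpoint => ->; rewrite subrr.
Qed.

Lemma in_conv_normalized (A : {set 'I_m}) (w : 'I_m -> K) :
  (forall i, 0 <= w i) -> (forall i, i \notin A -> w i = 0) -> 0 < \sum_i w i ->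
  in_conv t A (\sum_i (w i / \sum_j w j) *: mpoint d t i).
Proof.
move=> w_ge0 w_out w_gt0; exists (fun i => w i / \sum_j w j); split=> //.
- by move=> i; rewrite divr_ge0 // ltW.
- by move=> i /w_out ->; rewrite mul0r.
- by rewrite -big_distrl /= mulfV // gt_eqF.
Qed.

Variable T : {set {set 'I_m}}.
Hypothesis hT : triangulation d t T.

(* Radon: the point shared by the positive and negative parts of a dependence
   lies in conv A and conv B, hence in the face conv (A :&: B). *)
Lemma triangulation_radon (A B : {set 'I_m}) (l : 'I_m -> K) :
  A \in T -> B \in T ->
  (forall i, 0 < l i -> i \in A) -> (forall i, l i < 0 -> i \in B) ->
  (forall k, (k < (2 * d).+2)%N -> \sum_i l i * t i ^+ k = 0) ->
  forall s, 0 < l s -> s \in B.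
Proof.
move=> AT BT pos_A neg_B l_pow s ls; apply/negPn/negP => sB.
have [card_T inter_T _] := hT.
pose mu i := Num.max (l i) 0; pose nu i := Num.max (- l i) 0.
have mu_ge0 i : 0 <= mu i by rewrite le_max lexx orbT.
have nu_ge0 i : 0 <= nu i by rewrite le_max lexx orbT.
have mu_out i : i \notin A -> mu i = 0.
  by move=> iA; rewrite /mu max_r // leNgt; apply: contra iA => /pos_A.
have nu_out i : i \notin B -> nu i = 0.
  by move=> iB; rewrite /nu max_r // oppr_le0 leNgt; apply: contra iB => /neg_B.
have mu_nu k : (k < (2 * d).+2)%N -> \sum_i mu i * t i ^+ k = \sum_i nu i * t i ^+ k.
  move=> /l_pow l_k; apply/eqP; rewrite -subr_eq0 -sumrB; apply/eqP.
  rewrite -[RHS]l_k; apply: eq_bigr => i _.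
  rewrite -mulrBl /mu /nu; congr (_ * _).
  case: (leP 0 (l i)) => li; first by rewrite max_r ?subr0 ?oppr_le0.
  by rewrite max_l ?sub0r ?opprK // oppr_ge0 ltW.
have sum_mu_nu : \sum_i mu i = \sum_i nu i.
  by have := mu_nu 0%N isT; rewrite !(eq_bigr _ (fun i _ => mulr1 _)).
have mu_gt0 : 0 < \sum_i mu i.
  by rewrite (bigD1 s) //= ltr_pwDl ?sumr_ge0 // lt_max ls.
pose x : 'rV_(2 * d).+1 := \sum_i (mu i / \sum_j mu j) *: mpoint d t i.
have xA : in_conv t A x by apply: in_conv_normalized.
have xB : in_conv t B x.
  have -> : x = \sum_i (nu i / \sum_j nu j) *: mpoint d t i.
    apply/rowP => j; rewrite !sum_mpoint -sum_mu_nu.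
    rewrite [LHS](eq_bigr _ (fun i _ => mulrAC _ _ _)).
    rewrite [RHS](eq_bigr _ (fun i _ => mulrAC _ _ _)).
    by rewrite -!big_distrl /= (mu_nu j.+1 (ltn_ord j)).
  by apply: in_conv_normalized; rewrite // -sum_mu_nu.
have [kap [_ kap_out kap_sum x_kap]] := (inter_T A B AT BT x).1 (conj xA xB).
have a_out i : i \notin A -> mu i / \sum_j mu j = 0 by move/mu_out ->; rewrite mul0r.
have kap_outA i : i \notin A -> kap i = 0 by move=> iA; rewrite kap_out // inE (negbTE iA).
have sum_a : \sum_i mu i / \sum_j mu j = \sum_i kap i.
  by rewrite kap_sum -big_distrl /= mulfV // gt_eqF.
have := mpoint_coef_unique (eq_leq (card_T A AT)) a_out kap_outA sum_a x_kap s.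
rewrite kap_out ?inE ?(negbTE sB) ?andbF // => /eqP.
by rewrite mulf_eq0 invr_eq0 !gt_eqF // lt_max ls.
Qed.

Lemma divdiff_coef_circuit (U : {set 'I_m}) s r :
  U :\ r \in T -> U :\ s \in T -> s \in U -> r \in U -> s != r ->
  0 < divdiff_coef t U s * divdiff_coef t U r.
Proof.
move=> UrT UsT sU rU sr; have [card_T _ _] := hT.
set lam := divdiff_coef t U.
have card_U : #|U| = (2 * d).+3.
  by have := card_T _ UrT; rewrite (cardsD1 r U) rU => /= ->.
have lam_pow k : (k < (2 * d).+2)%N -> \sum_i lam i * t i ^+ k = 0.
  by move=> k_lt; apply: (sum_divdiff_coef_expr t_inj); rewrite card_U.
have lam_neq0 i : i \in U -> lam i != 0.
  move=> iU; rewrite /lam /divdiff_coef iU invr_eq0 -horner_node_poly.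
  by rewrite node_poly_nonroot ?setD11.
have lam_U i : lam i != 0 -> i \in U.
  by rewrite /lam /divdiff_coef; case: ifP; rewrite ?eqxx.
have same_sign a b : a \in U -> b \in U -> a != b -> U :\ b \in T -> U :\ a \in T ->
    0 < lam a -> 0 < lam b.
  move=> aU bU ab UbT UaT la; rewrite lt_def lam_neq0 //= leNgt; apply/negP => lb.
  suff : a \in U :\ a by rewrite setD11.
  apply: (triangulation_radon UbT UaT _ _ lam_pow la) => i li.
  - rewrite !inE lam_U ?andbT; last by rewrite gt_eqF.
    by apply: contraTneq li => ->; rewrite -leNgt ltW.
  - rewrite !inE lam_U ?andbT; last by rewrite lt_eqF.
    by apply: contraTneq li => ->; rewrite -leNgt ltW.
have := lam_neq0 s sU; rewrite neq_lt => /orP[ls|ls].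
  rewrite nmulr_rgt0 //; have := lam_neq0 r rU; rewrite neq_lt => /orP[// | lr].
  by move: ls; rewrite ltNge (ltW (same_sign r s _ _ _ _ _ lr)) // eq_sym.
by rewrite pmulr_rgt0 // (same_sign s r).
Qed.

End MomentCurve.

Section LinkParity.
Variable m : nat.
Implicit Types (X S F : {set 'I_m}) (a s r v : 'I_m).

Definition rank_in X a : nat := \sum_(u in X) (u < a)%N.

Lemma rank_inU1 X a b : b \notin X -> rank_in (b |: X) a = ((b < a) + rank_in X a)%N.
Proof. by move=> bX; rewrite /rank_in big_setU1. Qed.

Lemma neq_ltnC (i j : 'I_m) : i != j -> (j < i)%N = ~~ (i < j)%N.
Proof. by move=> ij; rewrite ltnNge leq_eqVlt val_eqE (negbTE ij). Qed.

Lemma above_add_rank_in X a :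
  a \in X -> (\sum_(u in X :\ a) (a < u) + rank_in X a)%N = #|X|.-1.
Proof.
move=> aX; rewrite /rank_in (big_setD1 a aX) /= ltnn add0n -big_split /=.
rewrite (cardsD1 a X) aX -sum1_card; apply: eq_bigr => u; rewrite !inE => /andP[ua _].
by rewrite (neq_ltnC ua); case: (u < a)%N.
Qed.

Lemma mem_link T v S : S \in link T v -> v \notin S /\ v |: S \in T.
Proof. by case/imsetP => A; rewrite inE => /andP[AT vA] ->; rewrite setD11 setD1K. Qed.

Lemma rnkE v S z :
  rnk v S z = ((xkey v < z) + (ykey v < z) + \sum_(u in S) (key u < z))%N.
Proof. by rewrite /rnk /= count_map -sumn_count sumnE big_map big_enum addnA. Qed.

Lemma rnk_xkey v S : rnk v S (xkey v) = rank_in S v.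
Proof.
rewrite rnkE /xkey /ykey ltnn (_ : (_ < _)%N = false) /=; last lia.
by apply: eq_bigr => u _; rewrite /key; congr nat_of_bool; apply/idP/idP; lia.
Qed.

Lemma rnk_ykey v S : v \notin S -> rnk v S (ykey v) = (rank_in S v).+1.
Proof.
move=> vS; rewrite rnkE /xkey /ykey ltnn (_ : (_ < _)%N = true) /=; last lia.
congr _.+1; apply: eq_bigr => u uS; have uv : (u : nat) != v.
  by apply: contraNneq vS => /val_inj <-.
by rewrite /key; congr nat_of_bool; apply/idP/idP; lia.
Qed.

Lemma odd_rnk_key v S s : v \notin S -> s \in S -> odd (rnk v S (key s)) = odd (rank_in S s).
Proof.
move=> vS sS; have sv : (s : nat) != v by apply: contraNneq vS => /val_inj <-.
have xy : (xkey v < key s)%N = (ykey v < key s)%N.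
  by rewrite /xkey /ykey /key; apply/idP/idP; lia.
rewrite rnkE xy addnn oddD odd_double /=; congr odd; apply: eq_bigr => u _.
by rewrite /key ltn_add2r ltn_mul2l.
Qed.

Lemma SminusE v S : v \notin S -> Sminus v S = S :\: Splus v S.
Proof.
move=> vS; apply/setP => u; rewrite !inE rnk_xkey rnk_ykey //=.
by case: (u \in S); case: (odd _); case: (odd _).
Qed.

Lemma mem_Splus v S s :
  v \notin S -> s \in S -> (s \in Splus v S) = (odd (rank_in S s) != odd (rank_in S v)).
Proof.
by move=> vS sS; rewrite inE sS odd_rnk_key // rnk_ykey //=; case: (odd _); case: (odd _).
Qed.

Lemma Splus_of_odd_rank_eq F v s r :
  s \notin F -> r \notin F -> v \notin F -> s != r -> s != v -> r != v ->
  odd (rank_in (r |: (v |: (s |: F))) s) = odd (rank_in (s |: (v |: (r |: F))) r) ->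
  (s \in Splus v (s |: F)) = (r \notin Splus v (r |: F)).
Proof.
move=> sF rF vF sr sv rv.
have vsF : v \notin s |: F by rewrite !inE negb_or eq_sym sv.
have vrF : v \notin r |: F by rewrite !inE negb_or eq_sym rv.
have rvsF : r \notin v |: (s |: F) by rewrite !inE !negb_or rv eq_sym sr rF.
have svrF : s \notin v |: (r |: F) by rewrite !inE !negb_or sv sr sF.
rewrite !mem_Splus ?setU11 // !rank_inU1 // !ltnn.
rewrite !(neq_ltnC sv, neq_ltnC rv, neq_ltnC sr) !oddD !oddb.
move: (s < r)%N (s < v)%N (r < v)%N (odd (rank_in F s)) (odd (rank_in F r)) (odd (rank_in F v)).
by do ![case].
Qed.

End LinkParity.

Section IncreasingNodes.
Variables (K : realFieldType) (d m : nat) (t : 'I_m -> K).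
Hypothesis t_incr : forall i j : 'I_m, (i < j)%N -> t i < t j.

Lemma incr_ltr i j : (t i < t j) = (i < j)%N.
Proof.
case: (ltngtP i j) => [/t_incr -> // | /t_incr /lt_gtF -> // | /val_inj ->].
by rewrite ltxx.
Qed.

Lemma incr_inj : injective t.
Proof.
move=> i j tij; apply: val_inj.
by case: (ltngtP i j) => // /t_incr; rewrite tij ltxx.
Qed.

Lemma prod_sub_sign (G : {set 'I_m}) a : a \notin G ->
  0 < (-1) ^+ (\sum_(j in G) (a < j)%N) * \prod_(j in G) (t a - t j).
Proof.
move=> aG; apply: (big_rec2 (fun n x => 0 < (-1) ^+ n * x)) => [|j n x jG IH].
  by rewrite mulr1 ltr01.
rewrite exprD mulrACA mulr_gt0 //.
have ja : j != a by apply: contraNneq aG => <-.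
case: (ltngtP a j) => [aj|ja'|/val_inj aj]; last by rewrite aj eqxx in ja.
- by rewrite expr1 mulN1r opprB subr_gt0 incr_ltr.
- by rewrite expr0 mul1r subr_gt0 incr_ltr.
Qed.

Lemma divdiff_coef_sign (U : {set 'I_m}) s :
  s \in U -> 0 < (-1) ^+ (#|U|.-1 + rank_in U s) * divdiff_coef t U s.
Proof.
move=> sU; rewrite -(above_add_rank_in sU) -addnA addnn -signr_odd oddD odd_double addbF.
rewrite signr_odd /divdiff_coef sU -invr_signM invr_gt0.
by apply: prod_sub_sign; rewrite setD11.
Qed.

Variable T : {set {set 'I_m}}.
Hypothesis hT : triangulation d t T.

(* The two simplices U :\ r and U :\ s of a triangulation lie on the same side
   of the circuit carried by U, whose sides are its odd and even positions. *)
Lemma circuit_odd_rank (U : {set 'I_m}) s r :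
  U :\ r \in T -> U :\ s \in T -> s \in U -> r \in U -> s != r ->
  odd (rank_in U s) = odd (rank_in U r).
Proof.
move=> UrT UsT sU rU sr.
have lam_gt0 := divdiff_coef_circuit incr_inj hT UrT UsT sU rU sr.
have := mulr_gt0 (divdiff_coef_sign sU) (divdiff_coef_sign rU).
rewrite mulrACA -exprD -signr_odd !oddD addbACA addbb /=.
by case: (odd (rank_in U s)); case: (odd (rank_in U r));
   rewrite //= expr1 mulN1r oppr_gt0 ltNge ltW.
Qed.

Lemma link_common_facet_Splus v (S R : {set 'I_m}) s r :
  S \in link T v -> R \in link T v -> s \in S -> r \in R ->
  S :\ s = S :&: R -> R :\ r = S :&: R ->
  (s \in Splus v S) = (r \notin Splus v R).
Proof.
move=> /mem_link[vS vST] /mem_link[vR vRT] sS rR FS FR; set F := S :&: R in FS FR.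
have sF : s \notin F by rewrite -FS setD11.
have rF : r \notin F by rewrite -FR setD11.
have SE : S = s |: F by rewrite -FS setD1K.
have RE : R = r |: F by rewrite -FR setD1K.
have sr : s != r by apply: contraNneq sF => sr; rewrite /F inE sS sr rR.
have sv : s != v by apply: contraNneq vS => <-.
have rv : r != v by apply: contraNneq vR => <-.
have vF : v \notin F by rewrite /F inE (negbTE vS).
have rvS : r \notin v |: S by rewrite SE !in_setU1 !negb_or rv eq_sym sr rF.
have svR : s \notin v |: R by rewrite RE !in_setU1 !negb_or sv sr sF.
have UE : r |: (v |: S) = s |: (v |: R).
  by apply/setP => u; rewrite SE RE !inE; case: (u == r); case: (u == v); case: (u == s).
have := Splus_of_odd_rank_eq sF rF vF sr sv rv; rewrite -SE -RE -UE; apply.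
apply: circuit_odd_rank => //.
- by rewrite setU1K.
- by rewrite UE setU1K.
- by rewrite !in_setU1 sS !orbT.
- exact: setU11.
Qed.

End IncreasingNodes.

Theorem lemma4p13 (K : realFieldType) (d m : nat) (t : 'I_m -> K)
  (ht : forall i j : 'I_m, (i < j)%N -> t i < t j)
  (T : {set {set 'I_m}}) (hT : triangulation d t T)
  (v : 'I_m) (S R : {set 'I_m})
  (hS : S \in link T v) (hR : R \in link T v)
  (hSR : #|S :&: R| = (2 * d)%N) :
  ~ (lower_facet v S (S :&: R) /\ lower_facet v R (S :&: R)) /\
  ~ (upper_facet v S (S :&: R) /\ upper_facet v R (S :&: R)).
Proof.
have [vS _] := mem_link hS; have [vR _] := mem_link hR.
have Splus_sub X s : s \in Splus v X -> s \in X by rewrite inE => /andP[].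
split=> -[[s sS FS] [r rR FR]].
- have := link_common_facet_Splus ht hT hS hR (Splus_sub _ _ sS) (Splus_sub _ _ rR).
  by rewrite -FS -FR sS rR => /(_ erefl erefl).
- move: sS rR; rewrite !SminusE // => /setDP[sS sS'] /setDP[rR rR'].
  have := link_common_facet_Splus ht hT hS hR sS rR.
  by rewrite -FS -FR rR' (negbTE sS') => /(_ erefl erefl).
Qed.
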